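(* Every quantifier-free formula in the first-order language of graphs has finite VC-dimension on the class $\mathcal J$ of all Johnson graphs; that is, for every quantifier-free formula $\varphi(\bar x;\bar y)$ with its free variables partitioned into tuples $\bar x,\bar y$, there is $N\in\mathbb N$ such that for every $G\in\mathcal J$ the set system $\big(V(G)^{|\bar x|},\{\{\bar a\mid G\models\varphi(\bar a,\bar b)\}\mid \bar b\in V(G)^{|\bar y|}\}\big)$ has VC-dimension at most $N$.
   Context: The first-order language of graphs has atomic formulas $Exy$ (adjacency) and $x=y$, closed under $\neg,\wedge,\vee$ and quantification over vertices; a formula is quantifier-free if it contains no quantifiers. For $m\ge k$ and a set $X$ with $|X|=m$, the Johnson graph $J(m,k)$ has as vertices the $k$-element subsets of $X$, two vertices adjacent iff their intersection has size $k-1$; $\mathcal J=\{J(m,k)\mid k,m\in\mathbb N, k\le m\}$. A set $A\subseteq U$ is shattered by a family $\mathcal S$ of subsets of $U$ if $\{A\cap S\mid S\in\mathcal S\}$ is the power set of $A$; the VC-dimension of $(U,\mathcal S)$ is the supremum of sizes of shattered subsets. *)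

From mathcomp Require Import ssreflect ssrfun ssrbool eqtype ssrnat seq choice fintype finfun finset.
Set Implicit Arguments. Unset Strict Implicit. Unset Printing Implicit Defensive.

(* First-order formulas of the language of graphs, with free variables
   indexed by 'I_n (n = number of free variables in scope).  The
   quantifiers bind a new variable, which gets index n in the body. *)
Inductive formula : nat -> Type :=
| FEdge n : 'I_n -> 'I_n -> formula n
| FEq   n : 'I_n -> 'I_n -> formula n
| FNeg  n : formula n -> formula n
| FAnd  n : formula n -> formula n -> formula n
| FOr   n : formula n -> formula n -> formula n
| FEx   n : formula n.+1 -> formula n
| FAll  n : formula n.+1 -> formula n.

Fixpoint quantifier_free n (f : formula n) : bool :=
  match f with
  | FEdge _ _ _ | FEq _ _ _ => true
  | FNeg _ g => quantifier_free g
  | FAnd _ g h | FOr _ g h => quantifier_free g && quantifier_free h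
  | FEx _ _ | FAll _ _ => false
  end.

Definition ext_env (V : Type) n (env : 'I_n -> V) (v : V) : 'I_n.+1 -> V :=
  fun i => match unlift ord_max i with Some j => env j | None => v end.

Fixpoint sat (V : finType) (E : rel V) n (f : formula n) : ('I_n -> V) -> bool :=
  match f in formula n return ('I_n -> V) -> bool with
  | FEdge _ i j => fun env => E (env i) (env j)
  | FEq _ i j => fun env => env i == env j
  | FNeg _ g => fun env => ~~ sat E g env
  | FAnd _ g h => fun env => sat E g env && sat E h env
  | FOr _ g h => fun env => sat E g env || sat E h env
  | FEx _ g => fun env => [exists v, sat E g (ext_env env v)]
  | FAll _ g => fun env => [forall v, sat E g (ext_env env v)]
  end.

(* joint assignment: x-variables are 0..p-1, y-variables are p..p+q-1 *)
Definition join_env (V : Type) p q (a : 'I_p -> V) (b : 'I_q -> V) : 'I_(p + q) -> V :=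
  fun i => match split i with inl j => a j | inr j => b j end.

Definition phi_family (V : finType) (E : rel V) p q (phi : formula (p + q))
  : {set {set {ffun 'I_p -> V}}} :=
  [set [set a : {ffun 'I_p -> V} | sat E phi (join_env a b) ]
     | b : {ffun 'I_q -> V}].

Definition shattered (U : finType) (A : {set U}) (S : {set {set U}}) : bool :=
  [set A :&: X | X in S] == powerset A.

Definition VCdim_le (U : finType) (S : {set {set U}}) (N : nat) : Prop :=
  forall A : {set U}, shattered A S -> #|A| <= N.

Definition johnson_vertex (m k : nat) : finType := {S : {set 'I_m} | #|S| == k}.

Definition johnson_adj (m k : nat) : rel (johnson_vertex m k) :=
  fun S T => #|val S :&: val T|.+1 == k.

(* A quantifier-free formula only sees the atomic diagram of its arguments, so
   the trace of phi(-, b) on a set A of p-tuples is determined by the diagram of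
   b and by the atomic types of b_1, ..., b_q over the set W of entries of A.
   Hence the number of traces is polynomial in |A| as soon as the number of
   neighbourhood traces N(v) :&: W is polynomial in |W|, and shattering A then
   forces 2^|A| <= poly(|A|), which bounds |A|.  In a Johnson graph, if S0 lies
   in N(T) :&: W then T = S0 - e + f, and N(T) :&: W is determined by S0 and by
   e and f, each of which matters only if it is one of the O(|W|^2) points where
   S0 differs from a set of W meeting it in at least k - 2 points. *)

From mathcomp Require Import ssreflect ssrfun ssrbool eqtype ssrnat seq choice fintype finfun finset.
From mathcomp Require Import bigop div zify.

Set Implicit Arguments.
Unset Strict Implicit.
Unset Printing Implicit Defensive.

Lemma leq_wexp2r e m n : m <= n -> m ^ e <= n ^ e.
Proof. by case: e => [|e] mn; rewrite ?expn0 // leq_exp2r. Qed.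

Lemma expn_le_exp2 m e : 0 < e -> m ^ e <= e ^ e * 2 ^ m.
Proof.
move=> e_gt0; have le_m : m <= e * 2 ^ (m %/ e).
  rewrite (leq_trans (ltnW (ltn_ceil m e_gt0))) // mulnC leq_mul2l.
  by rewrite ltn_expl ?orbT.
rewrite (leq_trans (leq_wexp2r e le_m)) // expnMn leq_mul2l -expnM.
by rewrite leq_pexp2l ?orbT // leq_divM.
Qed.

Lemma exp2_le_poly_bounded c d :
  exists N, forall a, 2 ^ a <= c * a.+1 ^ d -> a <= N.
Proof.
exists (d.+1 ^ d.+1 * 2 * c) => a le_2a.
have : a.+1 ^ d.+1 <= d.+1 ^ d.+1 * 2 * c * a.+1 ^ d.
  rewrite (leq_trans (expn_le_exp2 a.+1 (ltn0Sn d))) // (expnS 2) -!mulnA.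
  by rewrite leq_mul2l leq_mul2l le_2a !orbT.
by rewrite expnSr mulnC leq_pmul2r ?expn_gt0 // => /ltnW.
Qed.

Lemma card_bigcup_le (I T : finType) (D : {pred I}) (F : I -> {set T}) b :
  {in D, forall i, #|F i| <= b} -> #|\bigcup_(i in D) F i| <= #|D| * b.
Proof.
move=> le_F; rewrite -sum_nat_const.
rewrite (@leq_trans (\sum_(i in D) #|F i|)) ?leq_sum //.
elim/big_rec2: _ => [|i X n _ le_X]; first by rewrite cards0.
by rewrite (leq_trans (leq_card_setU _ _)) ?leq_add2l.
Qed.

Lemma card_imset_factor (T T1 T2 : finType) (f1 : T -> T1) (f2 : T -> T2)
    (D : {pred T}) :
  {in D &, forall x y, f1 x = f1 y -> f2 x = f2 y} -> #|f2 @: D| <= #|f1 @: D|.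
Proof.
move=> f12; pose g y := omap f2 [pick x in D | f1 x == y].
rewrite -(card_imset _ (@Some_inj _)) (leq_trans _ (leq_imset_card g _)) //.
apply/subset_leq_card/subsetP => _ /imsetP[_ /imsetP[x xD ->] ->].
apply/imsetP; exists (f1 x); first exact: imset_f.
rewrite /g; case: pickP => [z /andP[zD /eqP f1zx]|/(_ x)]; last by rewrite xD eqxx.
by rewrite /= (f12 z x).
Qed.

Section Exchange.
Variable T : finType.
Implicit Types S X Y : {set T}.

Lemma cardsI_setD_swap S X Y :
  #|S :&: X| + #|S :&: (Y :\: X)| = #|S :&: Y| + #|S :&: (X :\: Y)|.
Proof.
have := cardsID Y (S :&: X); have := cardsID X (S :&: Y).
by rewrite setIAC !setIDA; lia.
Qed.

Lemma cardsI1 S x : #|S :&: [set x]| = (x \in S).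
Proof.
have [xS|xNS] := boolP (x \in S).
  by rewrite (setIidPr _) ?cards1 // sub1set.
by rewrite setIC (disjoint_setI0 _) ?cards0 ?disjoints1.
Qed.

Lemma exchange_of_cardsI X Y : #|X| = #|Y| -> #|X :&: Y|.+1 = #|X| ->
  exists e f, [/\ e \in X, f \notin X &
    forall S, #|S :&: Y| + (e \in S) = #|S :&: X| + (f \in S)].
Proof.
move=> eq_XY XY_X.
have /cards1P[e De] : #|X :\: Y| == 1.
  by apply/eqP; have := cardsID Y X; lia.
have /cards1P[f Df] : #|Y :\: X| == 1.
  by apply/eqP; have := cardsID X Y; rewrite setIC; lia.
have := set11 e; rewrite -De inE => /andP[_ eX].
have := set11 f; rewrite -Df inE => /andP[fNX _].
by exists e, f; split=> // S; rewrite -!cardsI1 -De -Df cardsI_setD_swap.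
Qed.

End Exchange.

Section QuantifierFreeTypes.

Variables (V : finType) (E : rel V).

Definition atomic (x y : V) : bool * bool := (x == y, E x y).

Lemma eq_sat_qf n (f : formula n) (env1 env2 : 'I_n -> V) :
  quantifier_free f ->
  (forall i j, atomic (env1 i) (env1 j) = atomic (env2 i) (env2 j)) ->
  sat E f env1 = sat E f env2.
Proof.
move=> + atom12; elim: f env1 env2 atom12 => //= {}n.
- by move=> i j env1 env2 /(_ i j) [].
- by move=> i j env1 env2 /(_ i j) [].
- by move=> g IHg env1 env2 atom12 qf_g; rewrite (IHg env1 env2).
- by move=> g IHg h IHh env1 env2 atom12 /andP[qf_g qf_h];
    rewrite (IHg env1 env2) ?(IHh env1 env2).
- by move=> g IHg h IHh env1 env2 atom12 /andP[qf_g qf_h];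
    rewrite (IHg env1 env2) ?(IHh env1 env2).
Qed.

Definition qf_type (W : {set V}) (v : V) :=
  ([set w in W | w == v], [set w in W | E w v], [set w in W | E v w]).

Definition nbhd_traces (W : {set V}) := [set [set w in W | E w v] | v : V].

Lemma qf_type_atomic (W : {set V}) (v v' w : V) :
  w \in W -> qf_type W v = qf_type W v' ->
  atomic w v = atomic w v' /\ atomic v w = atomic v' w.
Proof.
move=> wW [/setP/(_ w) + /setP/(_ w) + /setP/(_ w)]; rewrite !inE wW /=.
by rewrite /atomic ![v == w]eq_sym ![v' == w]eq_sym => -> -> ->.
Qed.

Lemma card_traces_qf p q (phi : formula (p + q))
    (A : {set {ffun 'I_p -> V}}) (W : {set V}) :
  quantifier_free phi -> (forall a i, a \in A -> a i \in W) ->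
  #|[set A :&: X | X in phi_family E phi]|
    <= #|[set qf_type W v | v : V]| ^ q * 4 ^ (q * q).
Proof.
move=> qf_phi AW; rewrite /phi_family -imset_comp.
pose code (b : {ffun 'I_q -> V}) :=
  ([ffun j => qf_type W (b j)], [ffun ij : 'I_q * 'I_q => atomic (b ij.1) (b ij.2)]).
apply: (leq_trans (card_imset_factor (f1 := code) _)).
  move=> b b' _ _ [/ffunP eq_type /ffunP eq_atom]; apply/setP => a /=.
  have {}eq_type j : qf_type W (b j) = qf_type W (b' j).
    by have := eq_type j; rewrite !ffunE.
  rewrite !inE; case aA: (a \in A) => //=; apply: eq_sat_qf => // i j.
  rewrite /join_env; case: (split i) => i'; case: (split j) => j' //.
  - by have [] := qf_type_atomic (AW a i' aA) (eq_type j').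
  - by have [] := qf_type_atomic (AW a j' aA) (eq_type i').
  - by have := eq_atom (i', j'); rewrite !ffunE.
have code_sub : [set code b | b : {ffun 'I_q -> V}] \subset
    setX [set g in ffun_on [set qf_type W v | v : V]] setT.
  apply/subsetP => _ /imsetP[b _ ->]; rewrite !inE andbT.
  by apply/ffun_onP => j; rewrite ffunE imset_f.
apply: (leq_trans (subset_leq_card code_sub)).
by rewrite cardsX cardsE card_ffun_on cardsT card_ffun !card_prod !card_ord card_bool.
Qed.

Lemma card_eq_traces (W : {set V}) :
  #|[set [set w in W | w == v] | v : V]| <= #|W|.+1.
Proof.
have sub : [set [set w in W | w == v] | v : V] \subset set0 |: [set [set w] | w in W].
  apply/subsetP => _ /imsetP[v _ ->]; rewrite !inE; case vW: (v \in W).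
    apply/orP; right; apply/imsetP; exists v => //.
    by apply/setP => w; rewrite !inE andb_idl // => /eqP->.
  apply/orP; left; apply/eqP/setP => w; rewrite !inE.
  by apply/negbTE; apply: contraFN vW => /andP[+ /eqP<-].
rewrite (leq_trans (subset_leq_card sub)) // cardsU1 -add1n.
by rewrite leq_add ?leq_b1 ?leq_imset_card.
Qed.

Lemma card_qf_types (W : {set V}) : symmetric E ->
  #|[set qf_type W v | v : V]| <= #|W|.+1 * #|nbhd_traces W| ^ 2.
Proof.
move=> symE.
have sub : [set qf_type W v | v : V] \subset
    setX (setX [set [set w in W | w == v] | v : V] (nbhd_traces W)) (nbhd_traces W).
  apply/subsetP => _ /imsetP[v _ ->]; rewrite !inE /= !imset_f //.
  by apply/imsetP; exists v => //; apply/setP => w; rewrite !inE symE.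
rewrite (leq_trans (subset_leq_card sub)) // !cardsX -mulnA leq_mul ?card_eq_traces //.
Qed.

End QuantifierFreeTypes.

Lemma VCdim_qf_le_of_poly_nbhd_traces p q (phi : formula (p + q)) c d :
  quantifier_free phi ->
  exists N, forall (V : finType) (E : rel V), symmetric E ->
    (forall W : {set V}, #|nbhd_traces E W| <= c * #|W|.+1 ^ d) ->
    VCdim_le (phi_family E phi) N.
Proof.
move=> qf_phi; pose e := d.*2.+1.
have [N le_N] := exp2_le_poly_bounded ((c ^ 2 * p.+1 ^ e) ^ q * 4 ^ (q * q)) (e * q).
exists N => V E symE le_traces A /eqP shA; apply: le_N.
pose W := \bigcup_(a in A) [set a i | i : 'I_p].
have AW a i : a \in A -> a i \in W.
  by move=> aA; apply/bigcupP; exists a => //; apply: imset_f.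
have le_W : #|W|.+1 <= p.+1 * #|A|.+1.
  have : #|W| <= #|A| * p.
    by apply: card_bigcup_le => a _; rewrite (leq_trans (leq_imset_card _ _)) ?card_ord.
  lia.
have le_types : #|[set qf_type E W v | v : V]| <= c ^ 2 * p.+1 ^ e * #|A|.+1 ^ e.
  rewrite (leq_trans (card_qf_types W symE)) //.
  apply: (@leq_trans (#|W|.+1 * (c * #|W|.+1 ^ d) ^ 2)).
    by rewrite leq_mul2l leq_wexp2r ?orbT.
  rewrite expnMn -expnM mulnCA -expnS muln2 -mulnA -expnMn leq_mul2l.
  by rewrite leq_wexp2r ?orbT.
rewrite -card_powerset -shA (leq_trans (card_traces_qf E qf_phi AW)) //.
by rewrite mulnAC (expnM #|A|.+1) -expnMn leq_mul2r leq_wexp2r ?orbT.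
Qed.

Lemma johnson_adj_sym m k : symmetric (@johnson_adj m k).
Proof. by move=> S T; rewrite /johnson_adj setIC. Qed.

Section JohnsonNbhdTraces.

Variables (m k : nat) (W : {set johnson_vertex m k}).
Local Notation J := (johnson_vertex m k).

Definition near (S S' : J) := k <= #|val S :&: val S'| + 2.

Definition exchange_pts : {set 'I_m} :=
  \bigcup_(x in [set x in setX W W | near x.1 x.2]) (val x.1 :\: val x.2).

Definition opt_pts : {set option 'I_m} := None |: (Some @: exchange_pts).

(* [None] stands for an exchanged point with the same membership in every S
   near S0: the removed point lies in all of them, the added point in none. *)
Definition opt_mem (dflt : bool) (o : option 'I_m) (S : J) :=
  if o is Some x then x \in val S else dflt.

Definition exchange_trace (x : J * option 'I_m * option 'I_m) : {set J} :=
  let: (S0, e', f') := x in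
  [set S in W | near S0 S &&
     ((#|val S :&: val S0| + opt_mem false f' S).+1 == k + opt_mem true e' S)].

Lemma card_exchange_pts : #|exchange_pts| <= #|W| ^ 2 * 2.
Proof.
apply: (leq_trans (card_bigcup_le (b := 2) _)) => [x|].
  rewrite !inE /near => /andP[_ near_x].
  by have := cardsID (val x.2) (val x.1); rewrite (eqP (valP x.1)); lia.
rewrite -[_ ^ 2]/(#|W| * #|W|) -cardsX leq_mul2r subset_leq_card ?orbT //.
by apply/subsetP => x; rewrite inE => /andP[].
Qed.

Lemma card_opt_pts : #|opt_pts| <= 2 * #|W|.+1 ^ 2.
Proof.
rewrite cardsU1 card_imset //; last exact: Some_inj.
have := card_exchange_pts; have := leq_b1 (None \notin Some @: exchange_pts).
move: (None \notin _) => b; nia.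
Qed.

Lemma johnson_nbhd_trace (T : J) :
  [set w in W | johnson_adj w T]
    \in set0 |: (exchange_trace @: setX (setX W opt_pts) opt_pts).
Proof.
have [-> | [S0]] := set_0Vmem [set w in W | johnson_adj w T]; first exact: setU11.
rewrite inE => /andP[S0W /eqP adj_S0T].
have card_J (S : J) : #|val S| = k by exact: eqP (valP S).
have [||e [f [eS0 fNS0 exch]]] := exchange_of_cardsI (X := val S0) (Y := val T);
  rewrite ?card_J //.
pose e' := if e \in exchange_pts then Some e else None.
pose f' := if f \in exchange_pts then Some f else None.
apply/setU1P; right; apply/imsetP; exists (S0, e', f').
  by rewrite !inE S0W /e' /f'; do 2 case: ifP => /= [/(imset_f Some)->|_]; rewrite ?orbT.
apply/setP => S; rewrite !inE /johnson_adj; case SW: (S \in W) => //=.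
have := exch (val S); case: (boolP (near S0 S)) => /= [near_S0S | ]; last first.
  rewrite /near -ltnNge setIC /= => far exchS; apply/negbTE/eqP => adjS.
  by move: far exchS adjS; case: (e \in _) (f \in _); lia.
have e'E : opt_mem true e' S = (e \in val S).
  rewrite /e'; case: ifP => //= /negbT/negP eNpts; apply/esym/idPn => eNS.
  apply: eNpts; apply/bigcupP; exists (S0, S).
    by rewrite !inE /= S0W SW near_S0S.
  by rewrite !inE /= eNS; exact: eS0.
have f'E : opt_mem false f' S = (f \in val S).
  rewrite /f'; case: ifP => //= /negbT/negP fNpts; apply/esym/negbTE/negP => fS.
  apply: fNpts; apply/bigcupP; exists (S, S0).
    by rewrite !inE /= S0W SW /near setIC.
  by rewrite !inE /= fS fNS0.
by rewrite e'E f'E => exchS; rewrite -(eqn_add2r (e \in sval S)) addSn exchS.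
Qed.

Lemma card_johnson_nbhd_traces :
  #|nbhd_traces (@johnson_adj m k) W| <= 4 * #|W|.+1 ^ 5.
Proof.
have sub : nbhd_traces (@johnson_adj m k) W \subset
    set0 |: (exchange_trace @: setX (setX W opt_pts) opt_pts).
  by apply/subsetP => _ /imsetP[T _ ->]; exact: johnson_nbhd_trace.
rewrite (leq_trans (subset_leq_card sub)) // cardsU1.
rewrite (leq_trans (leq_add (leq_b1 _) (leq_imset_card _ _))) // !cardsX -mulnA.
apply: (@leq_trans (1 + #|W| * (2 * #|W|.+1 ^ 2) ^ 2)).
  by rewrite leq_add2l leq_mul2l leq_mul ?card_opt_pts ?orbT.
rewrite expnMn -expnM (expnS _ 4); have : 0 < #|W|.+1 ^ 4 by rewrite expn_gt0.
by move: (_ ^ 4) => Y; lia.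
Qed.

End JohnsonNbhdTraces.

Theorem mainTheorem9 :
  forall (p q : nat) (phi : formula (p + q)),
    quantifier_free phi ->
    exists N : nat, forall m k : nat, k <= m ->
      VCdim_le (phi_family (@johnson_adj m k) phi) N.
Proof.
move=> p q phi qf_phi.
have [N le_N] := VCdim_qf_le_of_poly_nbhd_traces 4 5 qf_phi.
exists N => m k _; apply: le_N; first exact: johnson_adj_sym.
exact: card_johnson_nbhd_traces.
Qed.
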